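(* Let $a,k,d,e,f$ be integers with $1\le a\le k$, $1\le d\le k$, $1\le f\le d$, and $e=d$ or $2e=d$. Then for all integers $m,n\ge0$, $${}_db_{dk+e,\,da+f}(m,n)-{}_db_{dk+e,\,da+f-1}(m,n)=\begin{cases}{}_d\overline{b}_{dk+e,\,dk-da+d}\big(m-(da+f-1),\,n-m\big)&\text{if } f\le e,\\ {}_d\overline{b}_{dk+e,\,dk-da}\big(m-(da+f-1),\,n-m\big)&\text{if } f>e.\end{cases}$$
   Context: Partitions are finite non-increasing sequences of positive integers; $\phi_i$ is the number of occurrences of $i$ as a part. For an integer $N$ and integers $m,n$, ${}_db_{dk+e,N}(m,n)$ is the number of partitions of $n$ into exactly $m$ parts with $\phi_i+\phi_{i+1}<dk+e$ for all $i\ge1$, $\phi_1<N$, and $d\mid\phi_{2i}$ for all $i\ge1$; ${}_d\overline{b}_{dk+e,N}(m,n)$ is the number of partitions of $n$ into exactly $m$ parts with $\phi_i+\phi_{i+1}<dk+e$ for all $i\ge1$, $\phi_1<N$, and $d\mid\phi_{2i+1}$ for all $i\ge0$. Both counts are $0$ when $m<0$ or $n<0$. *)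

From HB Require Import structures.
From mathcomp Require Import all_boot all_order all_algebra.
Set Implicit Arguments. Unset Strict Implicit. Unset Printing Implicit Defensive.
Import Order.TTheory GRing.Theory Num.Theory.
Local Open Scope ring_scope.

(* A partition of a natural number n is encoded by its multiplicity function:
   f : {ffun 'I_n -> 'I_n.+1}, with f j = phi_(j+1) (number of parts equal to j+1).
   Every part of a partition of n is <= n and each multiplicity is <= n, so this
   encoding is a bijection onto partitions of n (with the size constraint). *)
Definition phi (n : nat) (f : {ffun 'I_n -> 'I_n.+1}) (i : nat) : nat :=
  match insub i.-1 with
  | Some j => if (0 < i)%N then nat_of_ord (f j) else 0%N
  | None => 0%N
  end.

Definition part_size (n : nat) (f : {ffun 'I_n -> 'I_n.+1}) : nat :=
  (\sum_(j < n) (j.+1 * f j))%N.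

Definition num_parts (n : nat) (f : {ffun 'I_n -> 'I_n.+1}) : nat :=
  (\sum_(j < n) f j)%N.

(* Common conditions: |lambda| = n, exactly m parts, phi_i + phi_(i+1) < K
   for all i >= 1 (for i > n+1 both terms are 0, the same as i = n+1),
   and phi_1 < N. *)
Definition common_ok (K N : int) (m n : nat) (f : {ffun 'I_n -> 'I_n.+1}) : bool :=
  [&& part_size f == n, num_parts f == m,
      [forall i : 'I_n.+2, (0 < i)%N ==> ((phi f i + phi f i.+1)%:Z < K)]
    & (phi f 1)%:Z < N].

(* d | phi_(2i) for all i >= 1  (checked up to 2i <= n; beyond, phi = 0). *)
Definition even_div (d : int) (n : nat) (f : {ffun 'I_n -> 'I_n.+1}) : bool :=
  [forall i : 'I_n.+1, (0 < i)%N ==> (d %| (phi f (2 * i))%:Z)%Z].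

Definition odd_div (d : int) (n : nat) (f : {ffun 'I_n -> 'I_n.+1}) : bool :=
  [forall i : 'I_n.+1, (d %| (phi f (2 * i).+1)%:Z)%Z].

Definition dbcount (d K N m n : int) : nat :=
  if (m < 0) || (n < 0) then 0%N
  else #|[set f : {ffun 'I_`|n|%N -> 'I_(`|n|%N).+1} |
           common_ok K N `|m|%N f && even_div d f]|.

Definition dbbarcount (d K N m n : int) : nat :=
  if (m < 0) || (n < 0) then 0%N
  else #|[set f : {ffun 'I_`|n|%N -> 'I_(`|n|%N).+1} |
           common_ok K N `|m|%N f && odd_div d f]|.

From HB Require Import structures.
From mathcomp Require Import all_boot all_order all_algebra zify.
Import Order.TTheory GRing.Theory Num.Theory.
Local Open Scope ring_scope.

(* Write c = da + f - 1.  A partition counted by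
   b_{dk+e, c+1}(m, n) either has phi_1 < c (it is then counted by
   b_{dk+e, c}(m, n)) or has exactly c ones, so the difference on the left
   counts the partitions with phi_1 = c.  For those, deleting the c ones and
   subtracting 1 from every other part ("lowering") is a bijection onto the
   partitions of n - m into m - c parts whose multiplicities are shifted by
   one: phi'_i = phi_(i+1).  Hence the divisibility condition on even
   multiplicities becomes one on odd multiplicities, the pair conditions
   phi_i + phi_(i+1) < dk + e for i >= 2 are unchanged, and the pair
   condition at i = 1, namely c + phi_2 < dk + e with d | phi_2, becomes the
   bound phi'_1 < N' with N' = dk - da + d or dk - da according as f <= e. *)

Section Multiplicities.
Local Open Scope nat_scope.

Lemma phi0 n (f : {ffun 'I_n -> 'I_n.+1}) : phi f 0 = 0.
Proof. by rewrite /phi; case: insubP. Qed.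

Lemma phiS n (f : {ffun 'I_n -> 'I_n.+1}) (j : 'I_n) : phi f j.+1 = f j.
Proof. by rewrite /phi /= valK. Qed.

Lemma phi_out n (f : {ffun 'I_n -> 'I_n.+1}) i : n < i -> phi f i = 0.
Proof.
move=> hi; rewrite /phi; case: insubP => [u _ hu|] //.
by move: (ltn_ord u); rewrite hu; lia.
Qed.

Lemma sum_phi n (f : {ffun 'I_n -> 'I_n.+1}) (F : nat -> nat -> nat) :
  (forall i, F i 0 = 0) ->
  \sum_(j < n) F j.+1 (f j) = \sum_(i < n.+1) F i (phi f i).
Proof.
move=> F0; rewrite big_ord_recl phi0 F0 add0n; apply: eq_bigr => j _.
by rewrite lift0 phiS.
Qed.

Lemma part_sizeE n (f : {ffun 'I_n -> 'I_n.+1}) :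
  part_size f = \sum_(i < n.+1) i * phi f i.
Proof. by rewrite /part_size (sum_phi _ f (fun i x => i * x)) // => i; rewrite muln0. Qed.

Lemma num_partsE n (f : {ffun 'I_n -> 'I_n.+1}) :
  num_parts f = \sum_(i < n.+1) phi f i.
Proof. by rewrite /num_parts (sum_phi _ f (fun i x => x)). Qed.

Lemma sum_supp (F : nat -> nat) S R :
  (forall i, S <= i -> F i = 0) -> S <= R ->
  \sum_(i < R) F i = \sum_(i < S) F i.
Proof.
move=> hF hSR; rewrite -(subnKC hSR) big_split_ord /=.
by rewrite [X in _ + X]big1 ?addn0 // => i _; rewrite hF ?leq_addr.
Qed.

Lemma leq_sum_term (F : nat -> nat) R i : i < R -> F i <= \sum_(j < R) F j.
Proof. by move=> hi; rewrite (bigD1 (Ordinal hi)) //= leq_addr. Qed.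

Definition ffun_of (n : nat) (p : nat -> nat) : {ffun 'I_n -> 'I_n.+1} :=
  [ffun j : 'I_n => inord (p j.+1)].

Lemma ffun_of_phi n (p : nat -> nat) (f : {ffun 'I_n -> 'I_n.+1}) :
  p =1 phi f -> ffun_of n p = f.
Proof.
move=> hp; apply/ffunP => j; rewrite ffunE; apply/val_inj => /=.
by rewrite hp phiS inordK.
Qed.

Lemma encode_partition N R (p : nat -> nat) :
  p 0 = 0 -> (forall i, R <= i -> p i = 0) -> \sum_(i < R) i * p i = N ->
  [/\ phi (ffun_of N p) =1 p, part_size (ffun_of N p) = N
    & num_parts (ffun_of N p) = \sum_(i < R) p i].
Proof.
move=> p0 psupp hN.
have weight_le i : i * p i <= N.
  case: (ltnP i R) => hi; first by rewrite -hN (leq_sum_term (fun j => j * p j)).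
  by rewrite psupp ?muln0.
have pN i : N < i -> p i = 0 by move=> hi; have := weight_le i; nia.
have phiE : phi (ffun_of N p) =1 p.
  case=> [|i]; first by rewrite phi0.
  case: (ltnP i N) => hi; last by rewrite phi_out ?pN.
  rewrite (phiS _ _ (Ordinal hi)) ffunE inordK // ltnS.
  exact: leq_trans (leq_pmull _ (ltn0Sn i)) (weight_le i.+1).
have suppS i : minn R N.+1 <= i -> p i = 0.
  by rewrite geq_min => /orP[/psupp|/pN].
have trunc (F : nat -> nat) : (forall i, minn R N.+1 <= i -> F i = 0) ->
    \sum_(i < N.+1) F i = \sum_(i < R) F i.
  by move=> hF; rewrite !(sum_supp F (minn R N.+1)) ?geq_minl ?geq_minr.
split=> //.
- rewrite part_sizeE -[RHS]hN; under eq_bigr do rewrite phiE.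
  by apply: (trunc (fun i => i * p i)) => i /suppS ->; rewrite muln0.
- rewrite num_partsE; under eq_bigr do rewrite phiE.
  exact: (trunc p).
Qed.

End Multiplicities.

(* Views turning the bounded quantifications in common_ok, even_div and
   odd_div into statements about all indices: beyond the range of the
   encoding, phi vanishes. *)
Lemma pairsP (K : int) n (f : {ffun 'I_n -> 'I_n.+1}) :
  reflect (forall i, (0 < i)%N -> (phi f i + phi f i.+1)%:Z < K)
    [forall i : 'I_n.+2, (0 < i)%N ==> ((phi f i + phi f i.+1)%:Z < K)].
Proof.
apply: (iffP forallP) => [H i i0 | H i]; last by apply/implyP; exact: H.
case: (ltnP i n.+2) => hi; first by have := H (Ordinal hi); rewrite /= i0.
by have := H ord_max; rewrite /= !phi_out //; lia.
Qed.

Lemma evenP (d : int) n (f : {ffun 'I_n -> 'I_n.+1}) :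
  reflect (forall i, (0 < i)%N -> (d %| (phi f (2 * i))%:Z)%Z) (even_div d f).
Proof.
apply: (iffP forallP) => [H i i0 | H i]; last by apply/implyP; exact: H.
case: (ltnP i n.+1) => hi; first by have := H (Ordinal hi); rewrite /= i0.
by rewrite phi_out ?dvdz0 //; lia.
Qed.

Lemma oddP (d : int) n (f : {ffun 'I_n -> 'I_n.+1}) :
  reflect (forall i, (d %| (phi f (2 * i).+1)%:Z)%Z) (odd_div d f).
Proof.
apply: (iffP forallP) => [H i | H i]; last exact: H.
case: (ltnP i n.+1) => hi; first exact: (H (Ordinal hi)).
by rewrite phi_out ?dvdz0 //; lia.
Qed.

Section LowerRaise.
Local Open Scope nat_scope.

(* Delete the ones of a partition and subtract one from every other part. *)
Definition lower (p : nat -> nat) (i : nat) : nat := if i is 0 then 0 else p i.+1.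

(* Add one to every part and adjoin c ones: the inverse of lowering. *)
Definition raise (c : nat) (q : nat -> nat) (i : nat) : nat :=
  match i with 0 => 0 | 1 => c | j.+2 => q j.+1 end.

Lemma lower_raise c (q : nat -> nat) : q 0 = 0 -> lower (raise c q) =1 q.
Proof. by move=> q0 [|i]. Qed.

Lemma count_lower (p : nat -> nat) R :
  p 0 = 0 -> \sum_(i < R.+2) p i = p 1 + \sum_(i < R.+1) lower p i.
Proof.
move=> p0; rewrite big_ord_recl p0 add0n big_ord_recl.
by rewrite [X in _ = _ + X]big_ord_recl add0n.
Qed.

Lemma weight_lower (p : nat -> nat) R :
  p 0 = 0 ->
  \sum_(i < R.+2) i * p i = \sum_(i < R.+1) i * lower p i + \sum_(i < R.+2) p i.
Proof.
move=> p0; rewrite big_ord_recl mul0n add0n [X in _ = _ + X]big_ord_recl p0.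
rewrite add0n -big_split; apply: eq_bigr => i _ /=.
by rewrite mulSn addnC; case: (nat_of_ord i).
Qed.

End LowerRaise.

Section Bijection.
Local Open Scope nat_scope.
Variables (m n : nat).
Hypothesis (hmn : m <= n).

Definition lower_ffun (f : {ffun 'I_n -> 'I_n.+1}) : {ffun 'I_(n - m) -> 'I_(n - m).+1} :=
  ffun_of (n - m) (lower (phi f)).

Definition raise_ffun (c : nat) (g : {ffun 'I_(n - m) -> 'I_(n - m).+1}) :
  {ffun 'I_n -> 'I_n.+1} := ffun_of n (raise c (phi g)).

Lemma encode_lower (f : {ffun 'I_n -> 'I_n.+1}) :
  part_size f = n -> num_parts f = m ->
  [/\ phi (lower_ffun f) =1 lower (phi f), part_size (lower_ffun f) = n - m
    & num_parts (lower_ffun f) = m - phi f 1]%N.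
Proof.
rewrite part_sizeE num_partsE => hsize hnum.
have extend (F : nat -> nat) : F n.+1 = 0 ->
    (\sum_(i < n.+2) F i = \sum_(i < n.+1) F i)%N.
  by move=> hF; rewrite big_ord_recr /= hF addn0.
have hcount := count_lower (phi f) n (phi0 _ f).
have hweight := weight_lower (phi f) n (phi0 _ f).
have out : phi f n.+1 = 0 by rewrite phi_out.
have outw : n.+1 * phi f n.+1 = 0 by rewrite out muln0.
rewrite (extend _ out) in hcount.
rewrite (extend _ out) (extend (fun i => i * phi f i) outw) in hweight.
rewrite hsize hnum in hweight; rewrite hnum in hcount.
have lower_out i : (n.+1 <= i)%N -> lower (phi f) i = 0.
  by case: i => // i hi; rewrite /= phi_out //; lia.
have hW : (\sum_(i < n.+1) i * lower (phi f) i = n - m)%N.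
  by rewrite [in RHS]hweight addnK.
rewrite /lower_ffun.
have [phiE -> ->] := encode_partition (n - m) n.+1 (lower (phi f)) erefl lower_out hW.
by split=> //; rewrite hcount addKn.
Qed.

Lemma encode_raise c (g : {ffun 'I_(n - m) -> 'I_(n - m).+1}) :
  c <= m -> part_size g = n - m -> num_parts g = m - c ->
  [/\ phi (raise_ffun c g) =1 raise c (phi g), part_size (raise_ffun c g) = n
    & num_parts (raise_ffun c g) = m].
Proof.
move=> hcm; rewrite part_sizeE num_partsE => hsize hnum.
have hlow := lower_raise c (phi g) (phi0 _ g).
have raise_out i : (n - m).+2 <= i -> raise c (phi g) i = 0.
  by case: i => [|[|i]] // hi; rewrite /= phi_out //; lia.
have hcount : \sum_(i < (n - m).+2) raise c (phi g) i = m.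
  rewrite count_lower //; under eq_bigr do rewrite hlow.
  by rewrite hnum /= subnKC.
have hweight : \sum_(i < (n - m).+2) i * raise c (phi g) i = n.
  rewrite weight_lower // hcount; under eq_bigr do rewrite hlow.
  by rewrite hsize subnK.
by have [phiE -> ->] := encode_partition n (n - m).+2 _ erefl raise_out hweight.
Qed.

End Bijection.

(* Partitions with exactly c ones, counted with the even divisibility
   condition, correspond under lowering to partitions counted with the odd
   one; the hypothesis [transfer] says how the pair condition at i = 1 turns
   into the bound N' on the new number of ones. *)
Section Counting.
Variables (K N N' d : int) (c m n : nat).
Hypotheses (hcm : (c <= m)%N) (hmn : (m <= n)%N) (hcN : c%:Z < N).
Hypothesis transfer : forall x : nat,
  ((c + x)%:Z < K) && (d %| x%:Z)%Z = (x%:Z < N') && (d %| x%:Z)%Z.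

Lemma lower_ok (f : {ffun 'I_n -> 'I_n.+1}) :
  common_ok K N m f && even_div d f && (phi f 1%N == c) ->
  common_ok K N' (m - c) (lower_ffun m n f) && odd_div d (lower_ffun m n f).
Proof.
move=> /andP[/andP[/and4P[/eqP hsize /eqP hnum /pairsP pairs _] /evenP even]].
move=> /eqP p1; rewrite /common_ok.
have [phiE -> ->] := encode_lower m n hmn f hsize hnum.
rewrite p1 !eqxx /= -andbA; apply/and3P; split.
- apply/pairsP => -[|i] // _; rewrite !phiE; exact: (pairs i.+2).
- have pair1 := pairs 1%N isT; rewrite p1 in pair1.
  have even2 := even 1%N isT; rewrite muln1 in even2.
  by move: (transfer (phi f 2)); rewrite phiE pair1 even2 !andbT => <-.
- apply/oddP => i; rewrite phiE /=.
  by have := even i.+1 isT; rewrite mulnS add2n.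
Qed.

Lemma raise_ok (g : {ffun 'I_(n - m) -> 'I_(n - m).+1}) :
  common_ok K N' (m - c) g && odd_div d g ->
  common_ok K N m (raise_ffun m n c g) && even_div d (raise_ffun m n c g)
    && (phi (raise_ffun m n c g) 1%N == c).
Proof.
move=> /andP[/and4P[/eqP hsize /eqP hnum /pairsP pairs below] /oddP odd].
rewrite /common_ok; have [phiE -> ->] := encode_raise m n hmn c g hcm hsize hnum.
rewrite !phiE /= hcN !eqxx /= !andbT; apply/andP; split.
- apply/pairsP => -[|[|j]] // _; rewrite !phiE /=; last exact: (pairs j.+1).
  have odd1 := odd 0%N; rewrite muln0 in odd1.
  by move: (transfer (phi g 1)); rewrite below odd1 !andbT => ->.
- apply/evenP => -[|i] // _; rewrite phiE mulnS add2n /=; exact: odd.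
Qed.

Lemma lower_ffunK (f : {ffun 'I_n -> 'I_n.+1}) :
  common_ok K N m f && even_div d f && (phi f 1%N == c) ->
  raise_ffun m n c (lower_ffun m n f) = f.
Proof.
move=> /andP[/andP[/and4P[/eqP hsize /eqP hnum _ _] _] /eqP p1].
have [phiE _ _] := encode_lower m n hmn f hsize hnum.
apply: ffun_of_phi => -[|[|i]] /=; by rewrite ?phi0 ?p1 ?phiE.
Qed.

Lemma raise_ffunK (g : {ffun 'I_(n - m) -> 'I_(n - m).+1}) :
  common_ok K N' (m - c) g && odd_div d g ->
  lower_ffun m n (raise_ffun m n c g) = g.
Proof.
move=> /andP[/and4P[/eqP hsize /eqP hnum _ _] _].
have [phiE _ _] := encode_raise m n hmn c g hcm hsize hnum.
apply: ffun_of_phi => -[|i] /=; by rewrite ?phi0 ?phiE.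
Qed.

Lemma card_lower :
  #|[set f : {ffun 'I_n -> 'I_n.+1} | common_ok K N m f && even_div d f && (phi f 1%N == c)]|
  = #|[set g : {ffun 'I_(n - m) -> 'I_(n - m).+1} | common_ok K N' (m - c) g && odd_div d g]|.
Proof.
set S := [set f | _]; have inj : {in S &, injective (lower_ffun m n)}.
  move=> f1 f2; rewrite !inE => h1 h2 e.
  by rewrite -(lower_ffunK _ h1) e lower_ffunK.
rewrite -(card_in_imset inj); apply: eq_card => g; rewrite inE.
apply/imsetP/idP => [[f] | hg]; first by rewrite inE => /(lower_ok f) hf ->.
by exists (raise_ffun m n c g); rewrite ?inE ?raise_ok ?raise_ffunK.
Qed.

End Counting.

Lemma dbcount_nat (d K N : int) (m n : nat) :
  dbcount d K N m n
  = #|[set f : {ffun 'I_n -> 'I_n.+1} | common_ok K N m f && even_div d f]|.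
Proof. by []. Qed.

Lemma dbbarcount_nat (d K N : int) (m n : nat) :
  dbbarcount d K N m n
  = #|[set f : {ffun 'I_n -> 'I_n.+1} | common_ok K N m f && odd_div d f]|.
Proof. by []. Qed.

Lemma dbbarcount_neg (d K N m n : int) : (m < 0) || (n < 0) -> dbbarcount d K N m n = 0%N.
Proof. by rewrite /dbbarcount => ->. Qed.

Lemma common_okE (K N : int) m n (f : {ffun 'I_n -> 'I_n.+1}) :
  common_ok K N m f = common_ok K (phi f 1%N).+1 m f && ((phi f 1%N)%:Z < N).
Proof. by rewrite /common_ok ltz_nat ltnSn !andbT -!andbA. Qed.

Lemma card_split_phi1 (K : int) (c m n : nat) (P : pred {ffun 'I_n -> 'I_n.+1}) :
  #|[set f | common_ok K c.+1 m f && P f]|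
  = (#|[set f | common_ok K c m f && P f]|
     + #|[set f | common_ok K c.+1 m f && P f && (phi f 1%N == c)]|)%N.
Proof.
rewrite -(cardsID [set f | phi f 1%N == c]) addnC; congr (_ + _);
  apply: eq_card => f; rewrite !inE [in LHS]common_okE [in RHS]common_okE !ltz_nat.
- case: (ltngtP (phi f 1%N) c) => h /=; rewrite ?ltnS ?h ?(ltnW h) ?andbF //.
  by rewrite leqNgt h andbF.
- by case: eqP => [->|_]; rewrite ?ltnSn ?andbT ?andbF.
Qed.

(* A partition of n into m parts has at most m ones, and m <= n; hence
   there is no such partition with c ones if m < c or n < m. *)
Lemma phi1_le_num_parts n (f : {ffun 'I_n -> 'I_n.+1}) : (phi f 1%N <= num_parts f)%N.
Proof.
rewrite num_partsE; case: n f => [|n] f; first by rewrite phi_out.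
exact: (leq_sum_term (phi f) n.+2 1).
Qed.

Lemma num_parts_le_size n (f : {ffun 'I_n -> 'I_n.+1}) : (num_parts f <= part_size f)%N.
Proof.
rewrite num_partsE part_sizeE; apply: leq_sum => -[[|i] hi] _ /=.
  by rewrite phi0.
by rewrite leq_pmull.
Qed.

Lemma fixed_phi1_empty (K N d : int) (c m n : nat) :
  (m < c)%N || (n < m)%N ->
  [set f : {ffun 'I_n -> 'I_n.+1} | common_ok K N m f && even_div d f && (phi f 1%N == c)]
  = set0.
Proof.
move=> hsmall; apply/setP => f; rewrite !inE.
apply/negbTE/negP => /andP[/andP[/and4P[/eqP hsize /eqP hnum _ _] _] /eqP p1].
have := phi1_le_num_parts n f; have := num_parts_le_size n f; lia.
Qed.

Lemma threshold (d f e k s : int) :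
  0 < d -> 1 <= f <= d -> 1 <= e <= d ->
  (d * s + f - 1 < d * k + e) = (if f <= e then s <= k else s < k).
Proof.
move=> hd /andP[hf1 hfd] /andP[he1 hed].
case: ifP => hfe; apply/idP/idP => H; nia.
Qed.

Lemma bound_transfer (a k d e f : int) (x : nat) :
  0 < d -> 1 <= f <= d -> 1 <= e <= d ->
  (d * a + f - 1 + x%:Z < d * k + e) && (d %| x%:Z)%Z
  = (x%:Z < (if f <= e then d * k - d * a + d else d * k - d * a)) && (d %| x%:Z)%Z.
Proof.
move=> hd hf he; case hdx: (d %| x%:Z)%Z; rewrite ?andbF ?andbT //.
move/dvdzP: hdx => [y ->].
have -> : d * a + f - 1 + y * d = d * (a + y) + f - 1 by lia.
rewrite threshold //; case: ifP => _.
- by rewrite -ltzD1 -(ltr_pM2l hd); apply/idP/idP; lia.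
- by rewrite -(ltr_pM2l hd); apply/idP/idP; lia.
Qed.

Theorem mainTheorem4 (a k d e f : int)
  (ha : 1 <= a <= k) (hd : 1 <= d <= k) (hf : 1 <= f <= d)
  (he : e = d \/ 2 * e = d) :
  forall m n : int, 0 <= m -> 0 <= n ->
    (dbcount d (d * k + e) (d * a + f) m n)%:Z
      - (dbcount d (d * k + e) (d * a + f - 1) m n)%:Z
    = (if f <= e
       then dbbarcount d (d * k + e) (d * k - d * a + d) (m - (d * a + f - 1)) (n - m)
       else dbbarcount d (d * k + e) (d * k - d * a) (m - (d * a + f - 1)) (n - m))%:Z.
Proof.
case=> [m|//] [n|//] _ _.
have hd0 : 0 < d by lia.
have he1 : 1 <= e <= d by case: he; lia.
have [c hc] : exists c : nat, d * a + f - 1 = c%:Z.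
  by case E: (d * a + f - 1) => [c|c]; [exists c | lia].
rewrite hc; have -> : d * a + f = c.+1%:Z by lia.
rewrite !dbcount_nat card_split_phi1 PoszD addrAC subrr add0r.
have [hcm | hmc] := leqP c m; last first.
  by rewrite fixed_phi1_empty ?hmc // cards0 !dbbarcount_neg ?if_same //; lia.
have [hmn | hnm] := leqP m n; last first.
  by rewrite fixed_phi1_empty ?hnm ?orbT // cards0 !dbbarcount_neg ?if_same //; lia.
rewrite !subzn //; case: ifP => hfe; rewrite dbbarcount_nat; congr Posz;
  (apply: card_lower => // [|x]; [lia | by rewrite PoszD -hc bound_transfer ?hfe]).
Qed.
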